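(* Let $G$ be a connected plane graph on $n$ vertices whose infinite face is bounded by a simple triangle, and let $\mathcal{K}$ be its component tree with the cost function defined below. Then there is a constant $c$ (independent of $G$) such that for every integer $w\ge 1$ there exists an integer $\delta\in[0,w)$ such that the total cost of all nodes of $\mathcal{K}$ at depths $\delta,\delta+w,\delta+2w,\ldots$ is at most $c\,n/w$.
   Context: The face-vertex incidence graph $FV(G)$ has a node for every vertex and every face of $G$, with an edge between a vertex $v$ and a face $f$ whenever $v$ is incident to $f$. Run a breadth-first search in $FV(G)$ from the node of the infinite face; the level of a face or vertex is its depth in this BFS tree (so the infinite face has level 0). For each even integer $i\ge 2$, a level-$i$ component is a connected component of the subgraph of $G$ induced by the faces of level at least $i$. The component tree $\mathcal{K}$ has the level components as nodes, where a level component $K$ is an ancestor of $K'$ if the set of faces of $K$ contains the set of faces of $K'$; its root is the component consisting of all faces of $G$ except the infinite face. The boundary of a component $K$ is the set of edges incident both to a face in $K$ and to a face not in $K$; it is a simple cycle $C_K$, and boundaries of distinct components are edge-disjoint. The cost of a node $K$ is the length (number of edges) of $C_K$. *)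

(* Plane graphs are represented as combinatorial maps
   (rotation systems): a finite set of darts D, a fixed-point-free edge
   involution [ed] and a vertex rotation permutation [nd]. *)
From mathcomp Require Import all_boot all_order all_algebra.
Set Implicit Arguments. Unset Strict Implicit. Unset Printing Implicit Defensive.

Section PlaneMap.
Variables (D : finType) (ed nd : D -> D).

Definition fperm (d : D) : D := nd (ed d).

Definition vertex_of (d : D) : {set D} := [set x | fconnect nd d x].
Definition face_of (d : D) : {set D} := [set x | fconnect fperm d x].
Definition edge_of (d : D) : {set D} := [set d; ed d].

Definition vertices : {set {set D}} := [set vertex_of d | d : D].
Definition faces : {set {set D}} := [set face_of d | d : D].
Definition edges : {set {set D}} := [set edge_of d | d : D].

Definition is_map : Prop :=
  involutive ed /\ (forall d, ed d != d) /\ injective nd.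

Definition map_connected : Prop :=
  forall d d' : D, connect (fun x y => (y == ed x) || (y == nd x)) d d'.

(* genus 0 (Euler's formula) : the map is a plane embedding *)
Definition map_planar : Prop :=
  #|vertices| + #|faces| = #|edges| + 2.

Definition map_simple : Prop :=
  (forall d, vertex_of (ed d) != vertex_of d) /\
  (forall d d', vertex_of d = vertex_of d' ->
                vertex_of (ed d) = vertex_of (ed d') -> d = d').

(* nodes: inl v for a vertex v, inr f for a face f *)
Definition fvnode := ({set D} + {set D})%type.

Definition fv_adj : rel fvnode := fun x y =>
  match x, y with
  | inl v, inr f | inr f, inl v =>
      [&& v \in vertices, f \in faces & v :&: f != set0]
  | _, _ => false
  end.

Fixpoint reach (f0 : {set D}) (k : nat) : {set fvnode} :=
  match k with
  | 0 => [set inr f0]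
  | k'.+1 => reach f0 k' :|: [set y | [exists x in reach f0 k', fv_adj x y]]
  end.

Definition fv_bound : nat := #|{: fvnode}|.

(* BFS level (depth in the BFS tree from the infinite face); all nodes
   are reached within fv_bound steps in a connected map *)
Definition level (f0 : {set D}) (x : fvnode) : nat :=
  \big[minn/fv_bound]_(k < fv_bound.+1 | x \in reach f0 k) k.

Definition high_faces (f0 : {set D}) (i : nat) : {set {set D}} :=
  [set f in faces | i <= level f0 (inr f)].

Definition high_adj (f0 : {set D}) (i : nat) : rel {set D} := fun f f' =>
  [&& f \in high_faces f0 i, f' \in high_faces f0 i &
      [exists v in vertices, (v :&: f != set0) && (v :&: f' != set0)]].

Definition level_comp (f0 : {set D}) (i : nat) (K : {set {set D}}) : bool :=
  [exists f in high_faces f0 i, K == [set f' | connect (high_adj f0 i) f f']].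

(* nodes of the component tree: level-i components for even i >= 2
   (levels are <= fv_bound, so larger i give no components) *)
Definition ctree_node (f0 : {set D}) (K : {set {set D}}) : bool :=
  [exists i : 'I_fv_bound.+2, [&& ~~ odd i, 2 <= i & level_comp f0 i K]].

(* depth in the component tree = number of proper ancestors *)
Definition ctree_depth (f0 : {set D}) (K : {set {set D}}) : nat :=
  #|[set K' | ctree_node f0 K' & K \proper K']|.

Definition ctree_cost (K : {set {set D}}) : nat :=
  #|[set E in edges | [exists d in E,
        (face_of d \in K) && (face_of (ed d) \notin K)]]|.

End PlaneMap.

From HB Require Import structures.
From mathcomp Require Import all_boot all_order all_algebra zify.
Import Order.TTheory GRing.Theory Num.Theory.
Set Implicit Arguments. Unset Strict Implicit. Unset Printing Implicit Defensive.

(* A boundary edge of a node K of the component tree is crossed by a dart x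
   with face x in K and face (ed x) outside K.  These two faces share the
   vertex of x, so their BFS levels differ by at most 2.  K is a level-i
   component for an even i in (level (face (ed x)), level (face x)], which is
   the only even number in that window, and K is then the level-i component of
   face x: the dart determines K.  Every edge is thus on the boundary of at
   most two nodes, so the total cost is at most 2|E| <= 6n by Euler's formula
   (faces of a simple map have length >= 3), and one of the w residue classes
   of depths mod w carries at most 6n/w. *)

(* Lets [bigD1] split the [minn]-fold defining [level], whose start value is
   not a unit for [minn]. *)
HB.instance Definition _ := SemiGroup.isComLaw.Build nat minn minnA minnC.

Lemma even_window_unique b i1 i2 :
  ~~ odd i1 -> ~~ odd i2 -> b < i1 <= b.+2 -> b < i2 <= b.+2 -> i1 = i2.
Proof.
move=> o1 o2 h1 h2.
have [//|[e|e]] : i1 = i2 \/ i1 = i2.+1 \/ i2 = i1.+1 by lia.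
- by move: o1; rewrite e /= o2.
- by move: o2; rewrite e /= o1.
Qed.

Lemma exists_le_mean w (F : nat -> nat) : 0 < w ->
  exists2 j, j < w & F j * w <= \sum_(i < w) F i.
Proof.
move=> w_gt0.
case: (pickP (fun j : 'I_w => F j * w <= \sum_(i < w) F i)) => [j le_j | gt_all].
  by exists j.
have : \sum_(j < w) (\sum_(i < w) F i).+1 <= \sum_(j < w) F j * w.
  by apply: leq_sum => j _; rewrite ltnNge gt_all.
rewrite sum_nat_const card_ord -big_distrl /=; lia.
Qed.

Lemma sum_mod_classes (I : finType) (P : pred I) (g F : I -> nat) w : 0 < w ->
  \sum_(K | P K) F K = \sum_(j < w) \sum_(K | P K && (g K %% w == j)) F K.
Proof.
by move=> w_gt0; rewrite (partition_big (fun K => Ordinal (ltn_pmod (g K) w_gt0)) xpredT).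
Qed.

Lemma exists_mod_class_le_mean (I : finType) (P : pred I) (g F : I -> nat) w :
  0 < w -> exists2 j, j < w &
    (\sum_(K | P K && (g K %% w == j)) F K) * w <= \sum_(K | P K) F K.
Proof.
move=> w_gt0; rewrite (sum_mod_classes P g F w_gt0).
exact: (exists_le_mean (fun j => \sum_(K | P K && (g K %% w == j)) F K)).
Qed.

Lemma card_sep_sum (T : finType) (A : {pred T}) (b : pred T) :
  #|[set x in A | b x]| = \sum_(x in A) b x.
Proof.
rewrite -sum1_card big_mkcond [RHS]big_mkcond; apply: eq_bigr => x _.
by rewrite !inE; case: (x \in A); case: (b x).
Qed.

Lemma sum_card_incidence_le (I T : finType) (P : pred I) (A : {set T})
    (R : I -> T -> bool) k :
  (forall E, E \in A -> #|[set K | P K && R K E]| <= k) ->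
  \sum_(K | P K) #|[set E in A | R K E]| <= #|A| * k.
Proof.
move=> deg_le; under eq_bigr => K _ do rewrite card_sep_sum.
rewrite exchange_big -sum_nat_const; apply: leq_sum => E E_A.
by rewrite -card_sep_sum; apply: deg_le.
Qed.

Lemma partition_blocks (T : finType) (S : T -> {set T}) :
  (forall x, x \in S x) -> (forall x y, y \in S x -> S y = S x) ->
  partition [set S x | x : T] [set: T].
Proof.
move=> S_refl S_eq; apply/and3P; split.
- rewrite eqEsubset subsetT /=; apply/subsetP => x _.
  by apply/bigcupP; exists (S x); rewrite ?imset_f.
- apply/trivIsetP => _ _ /imsetP[a _ ->] /imsetP[b _ ->] Sab.
  rewrite -setI_eq0; apply/set0Pn => -[y]; rewrite inE => /andP[ya yb].
  by move: Sab; rewrite -(S_eq _ _ ya) (S_eq _ _ yb) eqxx.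
- by apply/imsetP => -[x _ /setP/(_ x)]; rewrite inE S_refl.
Qed.

Lemma fconnect_set_eq (T : finType) (f : T -> T) a b : injective f ->
  fconnect f a b -> [set x | fconnect f a x] = [set x | fconnect f b x].
Proof.
move=> f_inj ab; apply/setP => x; rewrite !inE.
by rewrite (same_connect (fconnect_sym f_inj) ab).
Qed.

Section CombinatorialMap.
Variables (D : finType) (ed nd : D -> D).
Hypothesis edK : involutive ed.
Hypothesis ed_neq : forall d, ed d != d.
Hypothesis nd_inj : injective nd.
Hypothesis no_loop : forall d, vertex_of nd (ed d) != vertex_of nd d.
Hypothesis no_multi : forall d d', vertex_of nd d = vertex_of nd d' ->
  vertex_of nd (ed d) = vertex_of nd (ed d') -> d = d'.
Hypothesis conn : map_connected ed nd.

Local Notation fperm := (fperm ed nd).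
Local Notation face := (face_of ed nd).
Local Notation vertex := (vertex_of nd).

Lemma fperm_inj : injective fperm.
Proof. by move=> x y /nd_inj; apply: (inv_inj edK). Qed.

Lemma card_darts_edges : #|D| = #|edges ed| * 2.
Proof.
have edge_refl x : x \in edge_of ed x by rewrite !inE eqxx.
have edge_eq x y : y \in edge_of ed x -> edge_of ed y = edge_of ed x.
  by rewrite !inE => /orP[] /eqP ->; rewrite /edge_of ?edK 1?setUC.
have part := partition_blocks edge_refl edge_eq.
rewrite -cardsT (@card_uniform_partition _ 2 _ _ _ part) //.
by move=> _ /imsetP[x _ ->]; rewrite cards2 eq_sym ed_neq.
Qed.

Lemma card_faces_le : (forall x, 2 < #|face x|) -> #|faces ed nd| * 3 <= #|D|.
Proof.
move=> face_gt2.
have face_refl x : x \in face x by rewrite inE connect0.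
have face_eq x y : y \in face x -> face y = face x.
  by rewrite inE => xy; apply/esym/fconnect_set_eq; [apply: fperm_inj|].
rewrite -cardsT (card_partition (partition_blocks face_refl face_eq)).
by rewrite -sum_nat_const; apply: leq_sum => _ /imsetP[x _ ->].
Qed.

Lemma map_connected_closed (a : {set D}) x y :
  (forall u, u \in a -> (ed u \in a) && (nd u \in a)) -> x \in a -> y \in a.
Proof.
move=> a_cl x_a.
pose e := fun u v => (v == ed u) || (v == nd u).
have e_sym : connect_sym e by move=> u v; rewrite (conn u v) (conn v u).
have e_closed : closed e a.
  by apply: intro_closed => // u v /orP[] /eqP -> /a_cl /andP[].
by rewrite -(closed_connect e_closed (conn x y)).
Qed.

Lemma card_darts_isolated_edge x : nd x = x -> nd (ed x) = ed x -> #|D| <= 2.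
Proof.
move=> ndx ndex.
suff all_in : [set x; ed x] = [set: D] by rewrite -cardsT -all_in cards2 ltnS leq_b1.
apply/setP => y; rewrite in_setT; apply: map_connected_closed (set21 x (ed x)).
by move=> u; rewrite !inE => /orP[] /eqP ->; rewrite ?edK ?ndx ?ndex !eqxx ?orbT.
Qed.

Lemma fperm_neq x : fperm x != x.
Proof.
apply: contra (no_loop x) => /eqP fx.
by rewrite /vertex_of (@fconnect_set_eq _ _ _ x nd_inj) // -{2}fx fconnect1.
Qed.

(* A face of length 2 would be a double edge, excluded unless the whole map is
   one edge. *)
Lemma fperm2_neq x : 2 < #|D| -> fperm (fperm x) != x.
Proof.
move=> D_gt2; apply/negP => /eqP fx2; move: D_gt2; rewrite ltnNge => /negP; apply.
set y := fperm x in fx2.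
have v_edx : vertex (ed x) = vertex y by apply: fconnect_set_eq nd_inj (fconnect1 _ _).
have v_edy : vertex (ed y) = vertex x.
  by rewrite -[in RHS]fx2; apply: fconnect_set_eq nd_inj (fconnect1 _ _).
have x_edy : x = ed y by apply: no_multi; rewrite ?edK.
have y_edx : ed x = y by rewrite x_edy edK.
apply: (@card_darts_isolated_edge x); first by rewrite -{2}fx2 /fperm -x_edy.
by rewrite {2}y_edx -{1}y_edx.
Qed.

Lemma card_face_gt2 x : 2 < #|D| -> 2 < #|face x|.
Proof.
move=> D_gt2; set y := fperm x; set z := fperm y.
have sub : [set x; y; z] \subset face x.
  apply/subsetP => u; rewrite !inE => /orP[/orP[]|] /eqP ->.
  - exact: connect0.
  - exact: fconnect1.
  - exact: connect_trans (fconnect1 _ _) (fconnect1 _ _).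
apply: leq_trans (subset_leq_card sub).
rewrite -setUA cardsU1 cards2 !inE (eq_sym x y) (eq_sym x z) (eq_sym y z).
rewrite /z /y (fperm_neq (fperm x)) (negbTE (fperm_neq x)).
by rewrite (negbTE (fperm2_neq x D_gt2)).
Qed.

Lemma card_edges_le d0 : map_planar ed nd -> #|face d0| = 3 ->
  #|edges ed| <= 3 * #|vertices nd|.
Proof.
rewrite /map_planar => euler face3.
have D_gt2 : 2 < #|D| by rewrite -face3 max_card.
have := card_faces_le (card_face_gt2^~ D_gt2); have := card_darts_edges; lia.
Qed.

End CombinatorialMap.

Section ComponentTree.
Variables (D : finType) (ed nd : D -> D) (f0 : {set D}).
Hypothesis edK : involutive ed.

Local Notation face := (face_of ed nd).
Local Notation vertex := (vertex_of nd).
Local Notation lvl := (level ed nd f0).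
Local Notation reach := (reach ed nd f0).
Local Notation fvb := (fv_bound D).
Local Notation high := (high_faces ed nd f0).
Local Notation adj := (high_adj ed nd f0).
Local Notation node := (ctree_node ed nd f0).

Lemma level_le_bound x : lvl x <= fvb.
Proof.
rewrite /level; elim/big_ind: _ => // [m n | i _]; first by rewrite geq_min => ->.
by rewrite -ltnS ltn_ord.
Qed.

Lemma level_le_reach x k : x \in reach k -> lvl x <= k.
Proof.
move=> x_k; case: (leqP k fvb) => [k_le | k_gt]; last first.
  exact: leq_trans (level_le_bound x) (ltnW k_gt).
by rewrite /level (bigD1 (Ordinal (k_le : k < fvb.+1))) //= geq_minl.
Qed.

Lemma reach_level x : lvl x < fvb -> x \in reach (lvl x).
Proof.
rewrite /level; elim/big_ind: _ => [| m n IHm IHn | //]; first by rewrite ltnn.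
by case: (leqP m n) => _; [apply: IHm | apply: IHn].
Qed.

Lemma reach_adj x y k : x \in reach k -> fv_adj ed nd x y -> y \in reach k.+1.
Proof.
move=> x_k xy; rewrite /= !inE; apply/orP; right.
by apply/existsP; exists x; rewrite x_k.
Qed.

Lemma level_faces_step f g v : f \in faces ed nd -> g \in faces ed nd ->
  v \in vertices nd -> v :&: f != set0 -> v :&: g != set0 ->
  lvl (inr g) <= lvl (inr f) + 2.
Proof.
move=> f_face g_face v_vert vf vg.
case: (ltnP (lvl (inr f)) fvb) => [f_lt | f_ge].
  rewrite addn2; apply/level_le_reach/(@reach_adj (inl v)).
    by apply: reach_adj (reach_level f_lt) _; rewrite /fv_adj v_vert f_face vf.
  by rewrite /fv_adj v_vert g_face vg.
by rewrite (leq_trans (level_le_bound _)) // (leq_trans f_ge) ?leq_addr.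
Qed.

Lemma high_adj_sym i : symmetric (adj i).
Proof.
move=> f g; apply/and3P/and3P => -[f_high g_high /existsP[v /and3P[vv vf vg]]];
  by split=> //; apply/existsP; exists v; rewrite vv vf vg.
Qed.

Lemma level_compE i K f : level_comp ed nd f0 i K -> f \in K ->
  K = [set f' | connect (adj i) f f'].
Proof.
case/existsP => f1 /andP[_ /eqP ->]; rewrite inE => f1f; apply/setP => g; rewrite !inE.
by rewrite (same_connect (sym_connect_sym (high_adj_sym i)) f1f).
Qed.

Lemma level_comp_high i K : level_comp ed nd f0 i K -> K \subset high i.
Proof.
case/existsP => f1 /andP[f1_high /eqP ->]; apply/subsetP => f; rewrite inE.
case/connectP => p; case/lastP: p => [_ -> // | p g].
by rewrite rcons_path last_rcons => /andP[_ /and3P[]] _ g_high _ ->.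
Qed.

Lemma vertex_meets_face x : vertex x :&: face x != set0.
Proof. by apply/set0Pn; exists x; rewrite !inE !connect0. Qed.

(* [nd x] lies on the face of [ed x], since [fperm (ed x) = nd x]. *)
Lemma vertex_meets_face_ed x : vertex x :&: face (ed x) != set0.
Proof.
apply/set0Pn; exists (nd x); rewrite !inE fconnect1 /=.
by rewrite -{2}(edK x); apply: fconnect1.
Qed.

Lemma level_faces_dart x : lvl (inr (face x)) <= lvl (inr (face (ed x))) + 2.
Proof.
apply: (@level_faces_step _ _ (vertex x)); rewrite ?imset_f //.
- exact: vertex_meets_face_ed.
- exact: vertex_meets_face.
Qed.

Lemma high_adj_dart i x : face x \in high i -> face (ed x) \in high i ->
  adj i (face x) (face (ed x)).
Proof.
move=> hx hex; rewrite /high_adj hx hex; apply/existsP; exists (vertex x).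
by rewrite imset_f ?vertex_meets_face ?vertex_meets_face_ed.
Qed.

Lemma boundary_dart_level x K : node K -> face x \in K -> face (ed x) \notin K ->
  exists i, [/\ ~~ odd i, lvl (inr (face (ed x))) < i <= lvl (inr (face x)) &
                K = [set f | connect (adj i) (face x) f]].
Proof.
case/existsP => i /and3P[i_even _ K_comp] x_K edx_K.
have K_high := subsetP (level_comp_high K_comp).
have x_high := K_high _ x_K.
exists i; split=> //; last exact: level_compE K_comp x_K.
move: x_high; rewrite inE => /andP[_ ->]; rewrite andbT ltnNge.
apply: contra edx_K => edx_ge; rewrite (level_compE K_comp x_K) inE connect1 //.
by apply: high_adj_dart; rewrite ?(K_high _ x_K) // inE imset_f.
Qed.

Lemma boundary_dart_node_unique x K1 K2 :
  node K1 -> face x \in K1 -> face (ed x) \notin K1 ->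
  node K2 -> face x \in K2 -> face (ed x) \notin K2 -> K1 = K2.
Proof.
move=> n1 x1 ex1 n2 x2 ex2.
have [i1 [e1 /andP[lo1 hi1] ->]] := boundary_dart_level n1 x1 ex1.
have [i2 [e2 /andP[lo2 hi2] ->]] := boundary_dart_level n2 x2 ex2.
have step := level_faces_dart x.
have -> // : i1 = i2.
apply: (even_window_unique (b := lvl (inr (face (ed x))))) => //; lia.
Qed.

Lemma boundary_edge_nodes_le2 E : E \in edges ed ->
  #|[set K | node K && [exists d in E, (face d \in K) && (face (ed d) \notin K)]]| <= 2.
Proof.
case/imsetP => x _ ->.
pose S y := [set K | [&& node K, face y \in K & face (ed y) \notin K]].
have S_le1 y : #|S y| <= 1.
  apply/card_le1_eqP => K1 K2; rewrite !inE => /and3P[n1 y1 ey1] /and3P[n2 y2 ey2].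
  exact: esym (boundary_dart_node_unique n1 y1 ey1 n2 y2 ey2).
apply: leq_trans (leq_trans (subset_leq_card _) (leq_card_setU (S x) (S (ed x)))) _.
  apply/subsetP => K; rewrite !inE => /andP[K_node /existsP[d /andP[]]].
  by rewrite !inE => /orP[] /eqP -> /andP[d_in d_out]; rewrite K_node d_in d_out ?orbT.
exact: leq_add (S_le1 x) (S_le1 (ed x)).
Qed.

Lemma total_cost_le : \sum_(K | node K) ctree_cost ed nd K <= #|edges ed| * 2.
Proof. exact: sum_card_incidence_le boundary_edge_nodes_le2. Qed.

End ComponentTree.

Local Open Scope ring_scope.

Theorem lemma5 :
  exists c : rat,
  forall (D : finType) (ed nd : D -> D) (d0 : D),
    is_map ed nd -> map_connected ed nd -> map_planar ed nd ->
    map_simple ed nd ->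
    (* the infinite face face_of d0 is bounded by a triangle *)
    #|face_of ed nd d0| = 3%N ->
    forall w : nat, (1 <= w)%N ->
      exists2 delta : nat, (delta < w)%N &
        (\sum_(K : {set {set D}} |
               ctree_node ed nd (face_of ed nd d0) K &&
               (ctree_depth ed nd (face_of ed nd d0) K %% w == delta)%N)
            (ctree_cost ed nd K))%:R
        <= c * (#|vertices nd|)%:R / w%:R.
Proof.
exists 6%:R => D ed nd d0 [edK [ed_neq nd_inj]] conn planar [no_loop no_multi] face3.
move=> w w_gt0.
set f0 := face_of ed nd d0.
have [j j_lt class_le] := exists_mod_class_le_mean (ctree_node ed nd f0)
  (ctree_depth ed nd f0) (@ctree_cost D ed nd) w_gt0.
exists j => //.
have total_le := total_cost_le nd f0 edK.
have edges_le := card_edges_le edK ed_neq nd_inj no_loop no_multi conn planar face3.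
rewrite ler_pdivlMr ?ltr0n // -!natrM ler_nat.
by rewrite (leq_trans class_le) // (leq_trans total_le) //; lia.
Qed.
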